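(* Let $c_0,\delta,\tilde\beta$ be positive constants and consider the Khokhlov–Zabolotskaya–Kuznetsov equation $$E:=\delta p_{ttt}+\tilde\beta\,(p^2)_{tt}-2c_0^3p_{zt}+c_0^4(p_{xx}+p_{yy})=0$$ for $p(x,y,z,t)$. A function $\Lambda(x,y,z,t,p,p_x,p_y,p_z,p_t)$ is a multiplier, i.e. $\mathcal{E}_p[\Lambda E]=0$ identically, if and only if $$\Lambda=\phi(x,y,z)+t\,\psi(x,y,z),\qquad\text{where}\quad \phi_{xx}+\phi_{yy}=\tfrac{2}{c_0}\psi_z,\quad \psi_{xx}+\psi_{yy}=0.$$ For any such $\phi,\psi$, every smooth solution $p$ of $E=0$ satisfies $$\partial_tT^t+\partial_xT^x+\partial_yT^y+\partial_zT^z=0$$ with $$T^t=(\phi+t\psi)(\delta p_{tt}+2\tilde\beta pp_t-2c_0^3p_z)-\psi(\delta p_t+\tilde\beta p^2),$$ $$T^x=c_0^4\big[(\phi+t\psi)p_x-p(\phi_x+t\psi_x)\big],\quad T^y=c_0^4\big[(\phi+t\psi)p_y-p(\phi_y+t\psi_y)\big],\quad T^z=2c_0^3p\psi.$$ In particular, the equation has infinitely many conservation laws.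
   Context: $\mathcal{E}_p=\sum(-D_x)^k(-D_y)^\ell(-D_z)^m(-D_t)^n\,\partial/\partial p_{kx\,\ell y\,mz\,nt}$ is the Euler (variational) operator with respect to $p$, where $D_x,D_y,D_z,D_t$ are total derivatives on the jet space; $\Lambda E$ is a total divergence iff $\mathcal{E}_p[\Lambda E]=0$ identically. Subscripts denote partial derivatives. *)

From Stdlib Require Import Reals List.
From Coquelicot Require Import Coquelicot.
Open Scope R_scope.

(* A function of n real variables is represented as f : (nat -> R) -> R reading
   only the coordinates 0..n-1. *)
Definition upd (v : nat -> R) (i : nat) (s : R) : nat -> R :=
  fun j => if Nat.eqb j i then s else v j.

Definition pd (i : nat) (f : (nat -> R) -> R) : (nat -> R) -> R :=
  fun v => Derive (fun s => f (upd v i s)) (v i).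

Fixpoint pds (l : list nat) (f : (nat -> R) -> R) : (nat -> R) -> R :=
  match l with nil => f | i :: l' => pd i (pds l' f) end.

Definition cont_n (n : nat) (f : (nat -> R) -> R) : Prop :=
  forall v eps, 0 < eps -> exists del, 0 < del /\
    forall w, (forall i, (i < n)%nat -> Rabs (w i - v i) < del) ->
      Rabs (f w - f v) < eps.

Definition smooth_n (n : nat) (f : (nat -> R) -> R) : Prop :=
  forall l : list nat, List.Forall (fun i => (i < n)%nat) l ->
    cont_n n (pds l f) /\
    forall v i, (i < n)%nat -> ex_derive (fun s => pds l f (upd v i s)) (v i).

Definition smooth3 (f : R -> R -> R -> R) : Prop :=
  smooth_n 3 (fun v => f (v 0%nat) (v 1%nat) (v 2%nat)).
Definition smooth4 (f : R -> R -> R -> R -> R) : Prop :=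
  smooth_n 4 (fun v => f (v 0%nat) (v 1%nat) (v 2%nat) (v 3%nat)).
Definition smooth9 (f : R -> R -> R -> R -> R -> R -> R -> R -> R -> R) : Prop :=
  smooth_n 9 (fun v => f (v 0%nat) (v 1%nat) (v 2%nat) (v 3%nat) (v 4%nat)
                         (v 5%nat) (v 6%nat) (v 7%nat) (v 8%nat)).

(* A point of the (infinite) jet space: base point (x,y,z,t) and the values
   ju k l m n = p_{kx ly mz nt}. *)
Record jet := Jet { jx : R; jy : R; jz : R; jt : R;
                    ju : nat -> nat -> nat -> nat -> R }.

Definition difffun := jet -> R.

Definition base (i : nat) (J : jet) : R :=
  match i with 0 => jx J | 1 => jy J | 2 => jz J | _ => jt J end.

Definition set_base (i : nat) (s : R) (J : jet) : jet :=
  match i with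
  | 0 => Jet s (jy J) (jz J) (jt J) (ju J)
  | 1 => Jet (jx J) s (jz J) (jt J) (ju J)
  | 2 => Jet (jx J) (jy J) s (jt J) (ju J)
  | _ => Jet (jx J) (jy J) (jz J) s (ju J)
  end.

Definition set_u (k l m n : nat) (s : R) (J : jet) : jet :=
  Jet (jx J) (jy J) (jz J) (jt J)
      (fun a b c d => if andb (andb (Nat.eqb a k) (Nat.eqb b l)) (andb (Nat.eqb c m) (Nat.eqb d n))
                      then s else ju J a b c d).

Definition dbase (i : nat) (F : difffun) : difffun :=
  fun J => Derive (fun s => F (set_base i s J)) (base i J).
Definition du (k l m n : nat) (F : difffun) : difffun :=
  fun J => Derive (fun s => F (set_u k l m n s J)) (ju J k l m n).

Definition sum_box (N : nat) (g : nat -> nat -> nat -> nat -> R) : R :=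
  sum_f_R0 (fun k => sum_f_R0 (fun l => sum_f_R0 (fun m =>
    sum_f_R0 (fun n => g k l m n) N) N) N) N.

Definition e (i j : nat) : nat := if Nat.eqb i j then 1%nat else 0%nat.

(* All differential functions occurring
   below (Lambda*E, of order 3, and at most 3 total derivatives of its partials)
   depend only on jet coordinates p_{kx ly mz nt} with k,l,m,n <= 6, so the
   truncated total derivative is the exact total derivative on them. *)
Definition jet_trunc : nat := 6.

Definition D (i : nat) (F : difffun) : difffun :=
  fun J => dbase i F J +
    sum_box jet_trunc (fun k l m n =>
      ju J (k + e i 0) (l + e i 1) (m + e i 2) (n + e i 3) * du k l m n F J).

Fixpoint iterD (i n : nat) (F : difffun) : difffun :=
  match n with 0 => F | S n' => D i (iterD i n' F) end.

Definition euler (F : difffun) : difffun :=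
  fun J => sum_box jet_trunc (fun k l m n =>
    (-1) ^ (k + l + m + n) *
    iterD 0 k (iterD 1 l (iterD 2 m (iterD 3 n (du k l m n F)))) J).

(* the KZK equation as a differential function:
   E = delta p_ttt + beta (p^2)_tt - 2 c0^3 p_zt + c0^4 (p_xx + p_yy),
   with (p^2)_tt = 2 p_t^2 + 2 p p_tt on the jet space *)
Definition KZK_E (c0 delta beta : R) : difffun :=
  fun J => delta * ju J 0 0 0 3
         + beta * (2 * (ju J 0 0 0 1) ^ 2 + 2 * ju J 0 0 0 0 * ju J 0 0 0 2)
         - 2 * c0 ^ 3 * ju J 0 0 1 1
         + c0 ^ 4 * (ju J 2 0 0 0 + ju J 0 2 0 0).

Definition lam_jet (Lam : R -> R -> R -> R -> R -> R -> R -> R -> R -> R) : difffun :=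
  fun J => Lam (jx J) (jy J) (jz J) (jt J) (ju J 0 0 0 0)
               (ju J 1 0 0 0) (ju J 0 1 0 0) (ju J 0 0 1 0) (ju J 0 0 0 1).

Definition is_multiplier (c0 delta beta : R)
  (Lam : R -> R -> R -> R -> R -> R -> R -> R -> R -> R) : Prop :=
  forall J, euler (fun J' => lam_jet Lam J' * KZK_E c0 delta beta J') J = 0.

Definition d3x (f : R -> R -> R -> R) : R -> R -> R -> R :=
  fun x y z => Derive (fun s => f s y z) x.
Definition d3y (f : R -> R -> R -> R) : R -> R -> R -> R :=
  fun x y z => Derive (fun s => f x s z) y.
Definition d3z (f : R -> R -> R -> R) : R -> R -> R -> R :=
  fun x y z => Derive (fun s => f x y s) z.

Definition d4x (f : R -> R -> R -> R -> R) : R -> R -> R -> R -> R :=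
  fun x y z t => Derive (fun s => f s y z t) x.
Definition d4y (f : R -> R -> R -> R -> R) : R -> R -> R -> R -> R :=
  fun x y z t => Derive (fun s => f x s z t) y.
Definition d4z (f : R -> R -> R -> R -> R) : R -> R -> R -> R -> R :=
  fun x y z t => Derive (fun s => f x y s t) z.
Definition d4t (f : R -> R -> R -> R -> R) : R -> R -> R -> R -> R :=
  fun x y z t => Derive (fun s => f x y z s) t.

Definition KZK_op (c0 delta beta : R) (p : R -> R -> R -> R -> R) : R -> R -> R -> R -> R :=
  fun x y z t =>
    delta * d4t (d4t (d4t p)) x y z t
    + beta * d4t (d4t (fun x' y' z' t' => (p x' y' z' t') ^ 2)) x y z t
    - 2 * c0 ^ 3 * d4z (d4t p) x y z t
    + c0 ^ 4 * (d4x (d4x p) x y z t + d4y (d4y p) x y z t).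

Definition Tt (c0 delta beta : R) (phi psi : R -> R -> R -> R)
  (p : R -> R -> R -> R -> R) : R -> R -> R -> R -> R :=
  fun x y z t =>
    (phi x y z + t * psi x y z) *
      (delta * d4t (d4t p) x y z t + 2 * beta * p x y z t * d4t p x y z t
       - 2 * c0 ^ 3 * d4z p x y z t)
    - psi x y z * (delta * d4t p x y z t + beta * (p x y z t) ^ 2).
Definition Tx (c0 : R) (phi psi : R -> R -> R -> R)
  (p : R -> R -> R -> R -> R) : R -> R -> R -> R -> R :=
  fun x y z t => c0 ^ 4 * ((phi x y z + t * psi x y z) * d4x p x y z t
                  - p x y z t * (d3x phi x y z + t * d3x psi x y z)).
Definition Ty (c0 : R) (phi psi : R -> R -> R -> R)
  (p : R -> R -> R -> R -> R) : R -> R -> R -> R -> R :=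
  fun x y z t => c0 ^ 4 * ((phi x y z + t * psi x y z) * d4y p x y z t
                  - p x y z t * (d3y phi x y z + t * d3y psi x y z)).
Definition Tz (c0 : R) (psi : R -> R -> R -> R)
  (p : R -> R -> R -> R -> R) : R -> R -> R -> R -> R :=
  fun x y z t => 2 * c0 ^ 3 * p x y z t * psi x y z.

From Pilot Require Import Defs.
From Stdlib Require Import Reals List Lia ZArith Lra FunctionalExtensionality Bool.
From Coquelicot Require Import Coquelicot.
Open Scope R_scope.

(* Evaluating E_p[Lambda E] at well-chosen jets isolates one coefficient at a
   time: those of p_tttt, p_xttt, p_yttt, p_zttt show that Lambda does not
   depend on p_t, p_x, p_y, p_z; then Lambda_pp = 0, so Lambda = A + p B; then
   B = 0; finally Lambda_tt = 0 and 2 c0^3 Lambda_zt = c0^4 (Lambda_xx + Lambda_yy),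
   which for Lambda = phi + t psi are the two stated equations. Conversely, for
   Lambda = phi + t psi the Euler expression reduces to a combination of these
   equations. *)

(** * Functions of finitely many real variables *)

Lemma upd_eq v i s : upd v i s i = s.
Proof. unfold upd. now rewrite Nat.eqb_refl. Qed.

Lemma upd_neq v i j s : j <> i -> upd v i s j = v j.
Proof. intros H. unfold upd. apply Nat.eqb_neq in H. now rewrite H. Qed.

Lemma upd_comm v i j s r : i <> j -> upd (upd v i s) j r = upd (upd v j r) i s.
Proof.
  intros H; apply functional_extensionality; intro k; unfold upd.
  destruct (Nat.eqb_spec k j), (Nat.eqb_spec k i); subst; try lia; reflexivity.
Qed.

Lemma upd_upd v i s r : upd (upd v i s) i r = upd v i r.
Proof.
  apply functional_extensionality; intro k; unfold upd.
  destruct (Nat.eqb_spec k i); reflexivity.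
Qed.

Lemma upd_id v i : upd v i (v i) = v.
Proof.
  apply functional_extensionality; intro k; unfold upd.
  destruct (Nat.eqb_spec k i); subst; reflexivity.
Qed.

Ltac upd_simpl := repeat (rewrite upd_eq || (rewrite upd_neq by lia)).

Ltac forall_lt := repeat (apply List.Forall_cons; [lia|]); apply List.Forall_nil.

Definition indep (f : (nat -> R) -> R) (j : nat) : Prop :=
  forall v s, f (upd v j s) = f v.

Lemma pd_zero i f : (forall v, f v = 0) -> forall v, pd i f v = 0.
Proof.
  intros H v; unfold pd. rewrite (Derive_ext _ (fun _ => 0)) by (intro; apply H).
  apply Derive_const.
Qed.

Lemma pd_indep f j : indep f j -> forall v, pd j f v = 0.
Proof.
  intros H v; unfold pd. rewrite (Derive_ext _ (fun _ => f v)) by (intro; apply H).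
  apply Derive_const.
Qed.

Lemma indep_pd f i j : indep f j -> indep (pd i f) j.
Proof.
  intros H v s. destruct (Nat.eq_dec i j) as [<-|Hij].
  - now rewrite !pd_indep.
  - unfold pd. rewrite upd_neq by auto. apply Derive_ext; intro r.
    rewrite upd_comm by auto. apply H.
Qed.

Lemma indep_pds f j l : indep f j -> indep (pds l f) j.
Proof. induction l; simpl; auto using indep_pd. Qed.

Lemma pds_indep f j l : indep f j -> In j l -> forall v, pds l f v = 0.
Proof.
  induction l as [|a l IH]; simpl; [tauto|]. intros H [->|Hin] v.
  - apply pd_indep, indep_pds, H.
  - apply pd_zero. intro; apply IH; auto.
Qed.

Lemma pds_app l1 l2 f : pds (l1 ++ l2) f = pds l1 (pds l2 f).
Proof. induction l1; simpl; congruence. Qed.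

Lemma indep_upd f j c : indep (fun w => f (upd w j c)) j.
Proof. intros v s. simpl. now rewrite upd_upd. Qed.

Lemma pds_upd f j c l : ~ In j l ->
  forall v, pds l (fun w => f (upd w j c)) v = pds l f (upd v j c).
Proof.
  induction l as [|a l IH]; simpl; intros Hn v; auto.
  unfold pd. rewrite <- (upd_neq v j a c) by (intro; apply Hn; auto).
  apply Derive_ext; intro s. rewrite IH by tauto.
  rewrite upd_comm by (intro; apply Hn; auto). reflexivity.
Qed.

Definition restrict (n : nat) (v : nat -> R) : nat -> R :=
  fun i => if Nat.ltb i n then v i else 0.

Lemma restrict_at n v i : (i < n)%nat -> restrict n v i = v i.
Proof. intros Hi; unfold restrict. now rewrite (proj2 (Nat.ltb_lt i n) Hi). Qed.

Lemma restrict_upd n v i s : (i < n)%nat -> restrict n (upd v i s) = upd (restrict n v) i s.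
Proof.
  intros Hi; apply functional_extensionality; intro j; unfold restrict, upd.
  destruct (Nat.eqb_spec j i), (Nat.ltb_spec j n); subst; try lia; reflexivity.
Qed.

Lemma pds_restrict n f l : List.Forall (fun i => (i < n)%nat) l ->
  forall v, pds l (fun w => f (restrict n w)) v = pds l f (restrict n v).
Proof.
  induction l as [|a l IH]; simpl; intros Hl v; auto. inversion Hl; subst.
  unfold pd. rewrite <- (restrict_at n v a) by auto. apply Derive_ext; intro s.
  rewrite IH by auto. now rewrite restrict_upd.
Qed.

Lemma is_derive_value (f : R -> R) x l l' : is_derive f x l -> l = l' -> is_derive f x l'.
Proof. now intros H <-. Qed.

Section Smooth.
Variables (n : nat) (f : (nat -> R) -> R).
Hypothesis Hf : smooth_n n f.

Lemma smooth_is_derive l v i : List.Forall (fun i => (i < n)%nat) l -> (i < n)%nat ->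
  is_derive (fun s => pds l f (upd v i s)) (v i) (pds (i :: l) f v).
Proof. intros Hl Hi. apply Derive_correct, (proj2 (Hf l Hl)), Hi. Qed.

Lemma smooth_is_derive_at l v i s : List.Forall (fun i => (i < n)%nat) l -> (i < n)%nat ->
  is_derive (fun r => pds l f (upd v i r)) s (pds (i :: l) f (upd v i s)).
Proof.
  intros Hl Hi. pose proof (smooth_is_derive l (upd v i s) i Hl Hi) as K.
  rewrite upd_eq in K. eapply is_derive_ext; [|exact K]. intro r; simpl. now rewrite upd_upd.
Qed.

Lemma smooth_pd i : (i < n)%nat -> smooth_n n (pd i f).
Proof.
  intros Hi l Hl. replace (pds l (pd i f)) with (pds (l ++ i :: nil) f)
    by (rewrite pds_app; reflexivity).
  apply Hf. apply List.Forall_app; auto.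
Qed.

Lemma indep_of_pd_zero i : (i < n)%nat -> (forall v, pd i f v = 0) -> indep f i.
Proof.
  intros Hi Z v s.
  assert (K : forall a b, a < b -> f (upd v i a) = f (upd v i b)).
  { intros a b Hab. apply (eq_is_derive (fun r => f (upd v i r))); [|exact Hab].
    intros t _. pose proof (smooth_is_derive_at nil v i t (List.Forall_nil _) Hi) as K.
    simpl in K. rewrite Z in K. exact K. }
  rewrite <- (upd_id v i) at 2.
  destruct (Rtotal_order s (v i)) as [h|[h|h]].
  - now apply K.
  - now rewrite h.
  - symmetry; now apply K.
Qed.

Lemma affine_of_indep i : (i < n)%nat -> indep (pd i f) i ->
  forall v, f v = f (upd v i 0) + v i * pd i f (upd v i 0).
Proof.
  intros Hi Hp v. set (c := pd i f (upd v i 0)).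
  assert (K : forall a b, a < b -> f (upd v i a) - a * c = f (upd v i b) - b * c).
  { intros a b Hab. apply (eq_is_derive (fun r => f (upd v i r) - r * c)); [|exact Hab].
    intros t _. eapply is_derive_value.
    - apply (is_derive_minus (fun r => f (upd v i r)) (fun r => r * c)).
      + apply (smooth_is_derive_at nil v i t (List.Forall_nil _) Hi).
      + apply (is_derive_value _ _ c); [auto_derive; [easy|ring]|reflexivity].
    - unfold c. simpl. rewrite <- (Hp (upd v i 0) t), upd_upd.
      unfold minus, plus, opp, mult, one, zero; simpl. ring. }
  assert (E : f (upd v i (v i)) - v i * c = f (upd v i 0) - 0 * c).
  { destruct (Rtotal_order (v i) 0) as [h|[h|h]].
    - now apply K.
    - now rewrite h.
    - symmetry; now apply K. }
  rewrite upd_id in E. lra.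
Qed.

Lemma smooth_upd j c : (j < n)%nat -> smooth_n n (fun w => f (upd w j c)).
Proof.
  intros Hj l Hl. destruct (in_dec Nat.eq_dec j l) as [Hin|Hn].
  - assert (Z : forall v, pds l (fun w => f (upd w j c)) v = 0)
      by (apply pds_indep with j; auto; apply indep_upd).
    split.
    + intros v eps He. exists 1; split; [lra|]. intros. rewrite !Z, Rminus_diag, Rabs_R0. lra.
    + intros v i Hi. apply (ex_derive_ext (fun _ => 0)); [intro; now rewrite Z|].
      apply ex_derive_const.
  - destruct (Hf l Hl) as [Hc Hd]. split.
    + intros v eps He. destruct (Hc (upd v j c) eps He) as [del [Hdel Hw]].
      exists del; split; auto. intros w Hwv. rewrite !pds_upd by auto. apply Hw.
      intros i Hi. unfold upd. destruct (Nat.eqb i j); [|auto].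
      rewrite Rminus_diag, Rabs_R0; lra.
    + intros v i Hi. destruct (Nat.eq_dec i j) as [->|Hij].
      * apply (ex_derive_ext (fun _ => pds l (fun w => f (upd w j c)) v)).
        { intro s. symmetry. apply indep_pds, indep_upd. }
        apply ex_derive_const.
      * apply (ex_derive_ext (fun s => pds l f (upd (upd v j c) i s))).
        { intro s. rewrite pds_upd by auto. rewrite upd_comm by auto. reflexivity. }
        rewrite <- (upd_neq v j i c) by auto. apply Hd; auto.
Qed.

Lemma smooth_restrict m : (m <= n)%nat -> smooth_n m (fun w => f (restrict m w)).
Proof.
  intros Hmn l Hl.
  assert (Hln : List.Forall (fun i => (i < n)%nat) l)
    by (eapply List.Forall_impl; [|exact Hl]; simpl; lia).
  destruct (Hf l Hln) as [Hc Hd]. split.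
  - intros v eps He. destruct (Hc (restrict m v) eps He) as [del [Hdel Hw]].
    exists del; split; auto. intros w Hwv. rewrite !pds_restrict by auto. apply Hw.
    intros i Hi. unfold restrict. destruct (Nat.ltb_spec i m); auto.
    rewrite Rminus_diag, Rabs_R0; lra.
  - intros v i Hi. apply (ex_derive_ext (fun s => pds l f (upd (restrict m v) i s))).
    { intro s. rewrite pds_restrict by auto. now rewrite restrict_upd. }
    rewrite <- (restrict_at m v i) by auto. apply Hd; lia.
Qed.

End Smooth.

Definition vec4 (x y z t : R) : nat -> R :=
  fun i => match i with 0 => x | 1 => y | 2 => z | _ => t end.

Lemma smooth3_dx F : smooth3 F -> smooth3 (d3x F).
Proof. intros H. exact (smooth_pd 3 _ H 0 ltac:(lia)). Qed.

Lemma smooth3_dy F : smooth3 F -> smooth3 (d3y F).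
Proof. intros H. exact (smooth_pd 3 _ H 1 ltac:(lia)). Qed.

Lemma is_derive3_x F x y z : smooth3 F -> is_derive (fun s => F s y z) x (d3x F x y z).
Proof.
  intros H. exact (smooth_is_derive 3 _ H nil (vec4 x y z 0) 0 (List.Forall_nil _) ltac:(lia)).
Qed.

Lemma is_derive3_y F x y z : smooth3 F -> is_derive (fun s => F x s z) y (d3y F x y z).
Proof.
  intros H. exact (smooth_is_derive 3 _ H nil (vec4 x y z 0) 1 (List.Forall_nil _) ltac:(lia)).
Qed.

Lemma is_derive3_z F x y z : smooth3 F -> is_derive (fun s => F x y s) z (d3z F x y z).
Proof.
  intros H. exact (smooth_is_derive 3 _ H nil (vec4 x y z 0) 2 (List.Forall_nil _) ltac:(lia)).
Qed.

Lemma smooth4_dx F : smooth4 F -> smooth4 (d4x F).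
Proof. intros H. exact (smooth_pd 4 _ H 0 ltac:(lia)). Qed.

Lemma smooth4_dy F : smooth4 F -> smooth4 (d4y F).
Proof. intros H. exact (smooth_pd 4 _ H 1 ltac:(lia)). Qed.

Lemma smooth4_dz F : smooth4 F -> smooth4 (d4z F).
Proof. intros H. exact (smooth_pd 4 _ H 2 ltac:(lia)). Qed.

Lemma smooth4_dt F : smooth4 F -> smooth4 (d4t F).
Proof. intros H. exact (smooth_pd 4 _ H 3 ltac:(lia)). Qed.

Lemma is_derive4_x F x y z t : smooth4 F -> is_derive (fun s => F s y z t) x (d4x F x y z t).
Proof.
  intros H. exact (smooth_is_derive 4 _ H nil (vec4 x y z t) 0 (List.Forall_nil _) ltac:(lia)).
Qed.

Lemma is_derive4_y F x y z t : smooth4 F -> is_derive (fun s => F x s z t) y (d4y F x y z t).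
Proof.
  intros H. exact (smooth_is_derive 4 _ H nil (vec4 x y z t) 1 (List.Forall_nil _) ltac:(lia)).
Qed.

Lemma is_derive4_z F x y z t : smooth4 F -> is_derive (fun s => F x y s t) z (d4z F x y z t).
Proof.
  intros H. exact (smooth_is_derive 4 _ H nil (vec4 x y z t) 2 (List.Forall_nil _) ltac:(lia)).
Qed.

Lemma is_derive4_t F x y z t : smooth4 F -> is_derive (fun s => F x y z s) t (d4t F x y z t).
Proof.
  intros H. exact (smooth_is_derive 4 _ H nil (vec4 x y z t) 3 (List.Forall_nil _) ltac:(lia)).
Qed.

Lemma smooth4_continuity_zt F x y z t : smooth4 F -> continuity_2d_pt (fun u v => F x y u v) z t.
Proof.
  intros H eps.
  destruct (proj1 (H nil (List.Forall_nil _)) (vec4 x y z t) eps (cond_pos eps)) as [del [Hdel Hw]].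
  exists (mkposreal del Hdel). intros u v Hu Hv. simpl in Hu, Hv.
  apply (Hw (vec4 x y u v)). intros i Hi.
  destruct i as [|[|[|[|i]]]]; simpl; try lia; auto; rewrite Rminus_diag, Rabs_R0; auto.
Qed.

Lemma smooth4_schwarz_zt p x y z t : smooth4 p -> d4z (d4t p) x y z t = d4t (d4z p) x y z t.
Proof.
  intros Hp. apply (Schwarz (fun u v => p x y u v) z t).
  - exists (mkposreal 1 Rlt_0_1). intros u v _ _. repeat split.
    + eexists; apply (is_derive4_z p x y u v Hp).
    + eexists; apply (is_derive4_t p x y u v Hp).
    + eexists; apply (is_derive4_z (d4t p) x y u v (smooth4_dt _ Hp)).
    + eexists; apply (is_derive4_t (d4z p) x y u v (smooth4_dz _ Hp)).
  - apply (smooth4_continuity_zt (d4z (d4t p))), smooth4_dz, smooth4_dt, Hp.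
  - apply (smooth4_continuity_zt (d4t (d4z p))), smooth4_dt, smooth4_dz, Hp.
Qed.

Lemma pd_of_is_derive (f : (nat -> R) -> R) i u (g : R -> R) l :
  (forall s, f (upd u i s) = g s) -> is_derive g (u i) l -> pd i f u = l.
Proof. intros H1 H2. unfold pd. apply is_derive_unique. now apply (is_derive_ext g). Qed.

Lemma is_derive_affine (g h : R -> R) x a b c :
  is_derive g x a -> is_derive h x b -> is_derive (fun s => g s + c * h s) x (a + c * b).
Proof.
  intros Hg Hh. eapply is_derive_value.
  - apply (is_derive_plus g (fun s => c * h s)); [exact Hg|]. apply (is_derive_scal h x c b Hh).
  - reflexivity.
Qed.

Definition at3 (F : R -> R -> R -> R) (u : nat -> R) : R := F (u 0%nat) (u 1%nat) (u 2%nat).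

Section AffineInTime.
Variables (phi psi : R -> R -> R -> R) (f : (nat -> R) -> R).
Hypotheses (Hphi : smooth3 phi) (Hpsi : smooth3 psi).
Hypothesis Hf : forall u, f u = at3 phi u + u 3%nat * at3 psi u.

Lemma pd_x_affine u : pd 0 f u = at3 (d3x phi) u + u 3%nat * at3 (d3x psi) u.
Proof.
  apply (pd_of_is_derive _ 0 u
           (fun s => phi s (u 1%nat) (u 2%nat) + u 3%nat * psi s (u 1%nat) (u 2%nat))).
  - intro s. rewrite Hf. unfold at3. upd_simpl. reflexivity.
  - apply is_derive_affine; apply is_derive3_x; assumption.
Qed.

Lemma pds_xx_affine u :
  pds (0 :: 0 :: nil)%nat f u = at3 (d3x (d3x phi)) u + u 3%nat * at3 (d3x (d3x psi)) u.
Proof.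
  apply (pd_of_is_derive _ 0 u
           (fun s => d3x phi s (u 1%nat) (u 2%nat) + u 3%nat * d3x psi s (u 1%nat) (u 2%nat))).
  - intro s. simpl. rewrite pd_x_affine. unfold at3. upd_simpl. reflexivity.
  - apply is_derive_affine; apply is_derive3_x, smooth3_dx; assumption.
Qed.

Lemma pd_y_affine u : pd 1 f u = at3 (d3y phi) u + u 3%nat * at3 (d3y psi) u.
Proof.
  apply (pd_of_is_derive _ 1 u
           (fun s => phi (u 0%nat) s (u 2%nat) + u 3%nat * psi (u 0%nat) s (u 2%nat))).
  - intro s. rewrite Hf. unfold at3. upd_simpl. reflexivity.
  - apply is_derive_affine; apply is_derive3_y; assumption.
Qed.

Lemma pds_yy_affine u :
  pds (1 :: 1 :: nil)%nat f u = at3 (d3y (d3y phi)) u + u 3%nat * at3 (d3y (d3y psi)) u.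
Proof.
  apply (pd_of_is_derive _ 1 u
           (fun s => d3y phi (u 0%nat) s (u 2%nat) + u 3%nat * d3y psi (u 0%nat) s (u 2%nat))).
  - intro s. simpl. rewrite pd_y_affine. unfold at3. upd_simpl. reflexivity.
  - apply is_derive_affine; apply is_derive3_y, smooth3_dy; assumption.
Qed.

Lemma pd_t_affine u : pd 3 f u = at3 psi u.
Proof.
  apply (pd_of_is_derive _ 3 u (fun s => at3 phi u + s * at3 psi u)).
  - intro s. rewrite Hf. unfold at3. upd_simpl. reflexivity.
  - auto_derive; [easy|ring].
Qed.

Lemma pds_zt_affine u : pds (2 :: 3 :: nil)%nat f u = at3 (d3z psi) u.
Proof.
  apply (pd_of_is_derive _ 2 u (fun s => psi (u 0%nat) (u 1%nat) s)).
  - intro s. simpl. rewrite pd_t_affine. unfold at3. upd_simpl. reflexivity.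
  - apply is_derive3_z, Hpsi.
Qed.

Lemma pds_tt_affine u : pds (3 :: 3 :: nil)%nat f u = 0.
Proof.
  apply (pd_of_is_derive _ 3 u (fun _ => at3 psi u)).
  - intro s. simpl. rewrite pd_t_affine. unfold at3. upd_simpl. reflexivity.
  - eapply is_derive_value; [apply is_derive_const|reflexivity].
Qed.

Lemma pds_ttt_affine u : pds (3 :: 3 :: 3 :: nil)%nat f u = 0.
Proof. apply pd_zero, pds_tt_affine. Qed.

End AffineInTime.

(** * Symbolic differential functions on the jet space *)

Inductive coord := CBase (i : nat) | CDer (k l m n : nat).

Definition coord_eqb (c d : coord) : bool :=
  match c, d with
  | CBase i, CBase j => Nat.eqb i j
  | CDer k l m n, CDer k' l' m' n' =>
      Nat.eqb k k' && Nat.eqb l l' && (Nat.eqb m m' && Nat.eqb n n')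
  | _, _ => false
  end.

Lemma coord_eqb_spec c d : reflect (c = d) (coord_eqb c d).
Proof.
  destruct c, d; simpl; try (constructor; congruence).
  - destruct (Nat.eqb_spec i i0); constructor; congruence.
  - destruct (Nat.eqb_spec k k0), (Nat.eqb_spec l l0), (Nat.eqb_spec m m0), (Nat.eqb_spec n n0);
      simpl; constructor; congruence.
Qed.

Definition coord_valid (c : coord) : bool :=
  match c with CBase i => Nat.ltb i 4 | CDer _ _ _ _ => true end.

Definition coord_val (c : coord) (J : jet) : R :=
  match c with CBase i => base i J | CDer k l m n => ju J k l m n end.

Definition coord_set (c : coord) (s : R) (J : jet) : jet :=
  match c with CBase i => set_base i s J | CDer k l m n => set_u k l m n s J end.

Lemma coord_val_set c c' s J : coord_valid c = true -> coord_valid c' = true ->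
  coord_val c' (coord_set c s J) = if coord_eqb c' c then s else coord_val c' J.
Proof.
  intros H H'. destruct c as [i|k l m n], c' as [j|a b c d]; simpl in *.
  - apply Nat.ltb_lt in H, H'.
    destruct i as [|[|[|[|i]]]]; try lia; destruct j as [|[|[|[|j]]]]; try lia; reflexivity.
  - destruct i as [|[|[|[|i]]]]; reflexivity.
  - destruct j as [|[|[|[|j]]]]; reflexivity.
  - reflexivity.
Qed.

Lemma coord_set_val c J : coord_valid c = true -> coord_set c (coord_val c J) J = J.
Proof.
  destruct J as [x y z t u], c as [i|k l m n]; simpl; intros H.
  - apply Nat.ltb_lt in H. destruct i as [|[|[|[|i]]]]; try lia; reflexivity.
  - unfold set_u; simpl. f_equal.
    do 4 (apply functional_extensionality; intro).
    destruct (Nat.eqb_spec x0 k), (Nat.eqb_spec x1 l), (Nat.eqb_spec x2 m), (Nat.eqb_spec x3 n);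
      simpl; subst; reflexivity.
Qed.

Definition jet9 (J : jet) : nat -> R :=
  fun i => match i with
  | 0 => jx J | 1 => jy J | 2 => jz J | 3 => jt J
  | 4 => ju J 0 0 0 0 | 5 => ju J 1 0 0 0 | 6 => ju J 0 1 0 0 | 7 => ju J 0 0 1 0
  | 8 => ju J 0 0 0 1 | _ => 0
  end.

Definition slot_der (k l m n : nat) : option nat :=
  match k, l, m, n with
  | 0, 0, 0, 0 => Some 4%nat | 1, 0, 0, 0 => Some 5%nat | 0, 1, 0, 0 => Some 6%nat
  | 0, 0, 1, 0 => Some 7%nat | 0, 0, 0, 1 => Some 8%nat | _, _, _, _ => None
  end.

Definition slot (c : coord) : option nat :=
  match c with
  | CBase i => if Nat.ltb i 4 then Some i else None
  | CDer k l m n => slot_der k l m n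
  end.

Lemma jet9_set c s J : coord_valid c = true ->
  jet9 (coord_set c s J) = match slot c with Some j => upd (jet9 J) j s | None => jet9 J end.
Proof.
  intros H. destruct c as [i|k l m n]; simpl in *.
  - apply Nat.ltb_lt in H. destruct i as [|[|[|[|i]]]]; try lia; simpl;
      apply functional_extensionality; intros [|[|[|[|[|[|[|[|[|x]]]]]]]]]; reflexivity.
  - destruct k as [|[|k]], l as [|[|l]], m as [|[|m]], n as [|[|n]]; simpl;
      apply functional_extensionality; intros [|[|[|[|[|[|[|[|[|x]]]]]]]]]; reflexivity.
Qed.

Lemma slot_val c j J : slot c = Some j -> coord_val c J = jet9 J j /\ (j < 9)%nat.
Proof.
  destruct c as [i|k l m n]; simpl.
  - destruct (Nat.ltb_spec i 4); intros E; inversion E; subst.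
    destruct j as [|[|[|[|j]]]]; try lia; simpl; split; auto; lia.
  - destruct k as [|[|k]], l as [|[|l]], m as [|[|m]], n as [|[|n]]; simpl; intros E;
      inversion E; subst; simpl; split; auto; lia.
Qed.

(* Differential expressions: [Par i] is a named constant and [At f l] the
   iterated partial [pds l] of the [f]-th first-order function, taken at [jet9]. *)
Inductive expr :=
  | Cst (z : Z) | Par (i : nat) | Var (c : coord) | At (f : nat) (l : list nat)
  | Add (a b : expr) | Mul (a b : expr).

Definition as_cst (a : expr) : option Z :=
  match a with Cst z => Some z | _ => None end.

Definition add_s (a b : expr) : expr :=
  match as_cst a, as_cst b with
  | Some x, Some y => Cst (x + y)
  | Some x, None => if Z.eqb x 0 then b else Add a b
  | None, Some y => if Z.eqb y 0 then a else Add a b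
  | None, None => Add a b
  end.

Definition mul_s (a b : expr) : expr :=
  match as_cst a, as_cst b with
  | Some x, Some y => Cst (x * y)
  | Some x, None => if Z.eqb x 0 then Cst 0 else if Z.eqb x 1 then b else Mul a b
  | None, Some y => if Z.eqb y 0 then Cst 0 else if Z.eqb y 1 then a else Mul a b
  | None, None => Mul a b
  end.

Definition sum_s (l : list expr) : expr := fold_right add_s (Cst 0) l.

Fixpoint wf (a : expr) : bool :=
  match a with
  | Var c => coord_valid c
  | At f l => forallb (fun j => Nat.ltb j 9) l
  | Add a b | Mul a b => wf a && wf b
  | _ => true
  end.

Lemma wf_add_s a b : wf a = true -> wf b = true -> wf (add_s a b) = true.
Proof.
  intros A B. unfold add_s. destruct (as_cst a), (as_cst b); simpl; auto;
    repeat match goal with |- context [if ?c then _ else _] => destruct c end;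
    simpl; rewrite ?A, ?B; auto.
Qed.

Lemma wf_mul_s a b : wf a = true -> wf b = true -> wf (mul_s a b) = true.
Proof.
  intros A B. unfold mul_s. destruct (as_cst a), (as_cst b); simpl; auto;
    repeat match goal with |- context [if ?c then _ else _] => destruct c end;
    simpl; rewrite ?A, ?B; auto.
Qed.

Lemma wf_sum_s l : forallb wf l = true -> wf (sum_s l) = true.
Proof.
  induction l; simpl; auto. intros H; apply andb_prop in H as [H1 H2]. apply wf_add_s; auto.
Qed.

Fixpoint pdiff (c : coord) (a : expr) : expr :=
  match a with
  | Cst _ | Par _ => Cst 0
  | Var c' => if coord_eqb c c' then Cst 1 else Cst 0
  | At f l => match slot c with Some j => At f (j :: l) | None => Cst 0 end
  | Add a b => add_s (pdiff c a) (pdiff c b)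
  | Mul a b => add_s (mul_s (pdiff c a) b) (mul_s a (pdiff c b))
  end.

Lemma wf_pdiff c a : coord_valid c = true -> wf a = true -> wf (pdiff c a) = true.
Proof.
  intros Hc. induction a; simpl; intros H; auto.
  - destruct (coord_eqb c c0); auto.
  - destruct (slot c) eqn:E; simpl; auto.
    destruct (slot_val _ _ (Jet 0 0 0 0 (fun _ _ _ _ => 0)) E) as [_ Hn].
    apply Nat.ltb_lt in Hn. now rewrite Hn.
  - apply andb_prop in H as [H1 H2]. apply wf_add_s; auto.
  - apply andb_prop in H as [H1 H2]. apply wf_add_s; apply wf_mul_s; auto.
Qed.

Definition mem_coord (c : coord) (l : list coord) : bool := existsb (coord_eqb c) l.

Definition first_order_coords : list coord :=
  CBase 0 :: CBase 1 :: CBase 2 :: CBase 3 :: CDer 0 0 0 0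
  :: CDer 1 0 0 0 :: CDer 0 1 0 0 :: CDer 0 0 1 0 :: CDer 0 0 0 1 :: nil.

(* An over-approximation of the coordinates an expression depends on. *)
Fixpoint coords (a : expr) : list coord :=
  match a with
  | Var c => c :: nil
  | At _ _ => first_order_coords
  | Add a b | Mul a b => coords a ++ coords b
  | _ => nil
  end.

Lemma slot_mem c j : slot c = Some j -> mem_coord c first_order_coords = true.
Proof.
  destruct c as [i|k l m n]; simpl.
  - destruct i as [|[|[|[|i]]]]; simpl; auto; discriminate.
  - destruct k as [|[|k]], l as [|[|l]], m as [|[|m]], n as [|[|n]]; simpl; auto; discriminate.
Qed.

Definition box_coords (N : nat) : list coord :=
  flat_map (fun k => flat_map (fun l => flat_map (fun m =>
    map (fun n => CDer k l m n) (seq 0 (S N))) (seq 0 (S N))) (seq 0 (S N))) (seq 0 (S N)).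

Definition shift (i : nat) (c : coord) : coord :=
  match c with
  | CDer k l m n => CDer (k + e i 0) (l + e i 1) (m + e i 2) (n + e i 3)
  | CBase _ => CBase 0
  end.

Definition tdiff (i : nat) (a : expr) : expr :=
  add_s (pdiff (CBase i) a)
    (sum_s (map (fun c => match c with
                          | CDer _ _ _ _ => mul_s (Var (shift i c)) (pdiff c a)
                          | CBase _ => Cst 0
                          end)
       (filter (fun c => mem_coord c (coords a)) (box_coords jet_trunc)))).

Fixpoint tdiff_iter (i n : nat) (a : expr) : expr :=
  match n with 0 => a | S n' => tdiff i (tdiff_iter i n' a) end.

Definition sign (n : nat) : Z := if Nat.even n then 1%Z else (-1)%Z.

Definition euler_term (a : expr) (c : coord) : expr :=
  match c with
  | CDer k l m n => mul_s (Cst (sign (k + l + m + n)))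
      (tdiff_iter 0 k (tdiff_iter 1 l (tdiff_iter 2 m (tdiff_iter 3 n (pdiff c a)))))
  | CBase _ => Cst 0
  end.

Definition euler_expr (a : expr) : expr :=
  sum_s (map (euler_term a) (filter (fun c => mem_coord c (coords a)) (box_coords jet_trunc))).

Lemma wf_tdiff i a : (i < 4)%nat -> wf a = true -> wf (tdiff i a) = true.
Proof.
  intros Hi H. unfold tdiff. apply wf_add_s.
  - apply wf_pdiff; auto. simpl. now apply Nat.ltb_lt.
  - apply wf_sum_s. generalize (filter (fun c => mem_coord c (coords a)) (box_coords jet_trunc)).
    induction l as [|c l IH]; simpl; auto. rewrite IH, andb_true_r.
    destruct c; simpl; auto. apply wf_mul_s; simpl; auto. apply wf_pdiff; auto.
Qed.

Lemma wf_tdiff_iter i n a : (i < 4)%nat -> wf a = true -> wf (tdiff_iter i n a) = true.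
Proof. induction n; simpl; auto. intros; apply wf_tdiff; auto. Qed.


Definition sum_list (l : list R) : R := fold_right Rplus 0 l.

Lemma sum_list_app l1 l2 : sum_list (l1 ++ l2) = sum_list l1 + sum_list l2.
Proof. induction l1; simpl; [ring|]. unfold sum_list in *; simpl. rewrite IHl1. ring. Qed.

Lemma sum_f_R0_seq f N : sum_f_R0 f N = sum_list (map f (seq 0 (S N))).
Proof.
  induction N; [simpl; unfold sum_list; simpl; ring|].
  rewrite seq_S, map_app, sum_list_app. simpl sum_f_R0. rewrite IHN. unfold sum_list; simpl. ring.
Qed.

Lemma sum_list_flat_map {A B} (h : B -> R) (F : A -> list B) L :
  sum_list (map h (flat_map F L)) = sum_list (map (fun x => sum_list (map h (F x))) L).
Proof. induction L; simpl; auto. rewrite map_app, sum_list_app, IHL. reflexivity. Qed.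

Lemma sum_list_zero {A} (L : list A) : sum_list (map (fun _ => 0) L) = 0.
Proof. induction L; simpl; auto. unfold sum_list in *; simpl. rewrite IHL; ring. Qed.

Lemma sum_list_filter {A} (h : A -> R) P L : (forall x, In x L -> P x = false -> h x = 0) ->
  sum_list (map h L) = sum_list (map h (filter P L)).
Proof.
  induction L; simpl; intros H; auto. destruct (P a) eqn:E; simpl.
  - unfold sum_list in *; simpl. f_equal. apply IHL; auto.
  - rewrite H by auto. unfold sum_list in *; simpl. rewrite IHL by auto. ring.
Qed.

Definition on_der (g : nat -> nat -> nat -> nat -> R) (c : coord) : R :=
  match c with CDer k l m n => g k l m n | CBase _ => 0 end.

Lemma sum_box_coords N g : sum_box N g = sum_list (map (on_der g) (box_coords N)).
Proof.
  unfold sum_box, box_coords. rewrite sum_f_R0_seq, sum_list_flat_map. f_equal.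
  apply map_ext; intro k. rewrite sum_f_R0_seq, sum_list_flat_map. f_equal; apply map_ext; intro l.
  rewrite sum_f_R0_seq, sum_list_flat_map. f_equal; apply map_ext; intro m.
  rewrite sum_f_R0_seq, map_map. reflexivity.
Qed.

Lemma D_zero i : Defs.D i (fun _ => 0) = fun _ => 0.
Proof.
  apply functional_extensionality; intro J. unfold Defs.D, dbase, du.
  rewrite Derive_const, sum_box_coords, (map_ext _ (fun _ => 0)).
  - rewrite sum_list_zero; ring.
  - intros [j|k l m n]; simpl; auto. rewrite Derive_const; ring.
Qed.

Lemma iterD_zero i n : iterD i n (fun _ => 0) = fun _ => 0.
Proof. induction n; simpl; auto. rewrite IHn. apply D_zero. Qed.

Lemma pow_m1_sign n : (-1) ^ n = IZR (sign n).
Proof.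
  induction n; [reflexivity|]. simpl pow. rewrite IHn. unfold sign.
  rewrite Nat.even_succ, <- Nat.negb_even. destruct (Nat.even n); simpl; ring.
Qed.

Lemma forallb_lt9 l :
  forallb (fun j => Nat.ltb j 9) l = true -> List.Forall (fun i => (i < 9)%nat) l.
Proof.
  induction l; simpl; auto. intros H; apply andb_prop in H as [H1 H2].
  constructor; auto. now apply Nat.ltb_lt.
Qed.

Definition mem_indep (f j : nat) (known : list (nat * nat)) : bool :=
  existsb (fun p => Nat.eqb (fst p) f && Nat.eqb (snd p) j) known.

Lemma mem_indep_In f j known : mem_indep f j known = true -> In (f, j) known.
Proof.
  unfold mem_indep. intros H. apply existsb_exists in H as [[a b] [Hin H]].
  simpl in H. apply andb_prop in H as [H1 H2]. apply Nat.eqb_eq in H1, H2. now subst.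
Qed.

Lemma mem_indep_nil (fs : nat -> (nat -> R) -> R) f j : mem_indep f j nil = true -> indep (fs f) j.
Proof. discriminate. Qed.

(* Simplification using known independences [(f, j)] of the first-order
   functions and known values [vals c] of jet coordinates. *)
Fixpoint reduce (known : list (nat * nat)) (vals : coord -> option Z) (a : expr) : expr :=
  match a with
  | Var c => match vals c with Some z => Cst z | None => Var c end
  | At f l => if existsb (fun j => mem_indep f j known) l then Cst 0 else At f l
  | Add a b => add_s (reduce known vals a) (reduce known vals b)
  | Mul a b => mul_s (reduce known vals a) (reduce known vals b)
  | _ => a
  end.

Section Interp.
Variables (ps : nat -> R) (fs : nat -> (nat -> R) -> R).

Fixpoint interp (J : jet) (a : expr) : R :=
  match a with
  | Cst z => IZR z
  | Par i => ps i
  | Var c => coord_val c J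
  | At f l => pds l (fs f) (jet9 J)
  | Add a b => interp J a + interp J b
  | Mul a b => interp J a * interp J b
  end.

Lemma as_cst_interp a z J : as_cst a = Some z -> interp J a = IZR z.
Proof. destruct a; simpl; congruence. Qed.

Lemma interp_add_s J a b : interp J (add_s a b) = interp J a + interp J b.
Proof.
  unfold add_s. destruct (as_cst a) as [x|] eqn:Ha, (as_cst b) as [y|] eqn:Hb;
    try rewrite (as_cst_interp _ _ _ Ha); try rewrite (as_cst_interp _ _ _ Hb).
  - now rewrite <- plus_IZR.
  - destruct (Z.eqb_spec x 0); subst; simpl; try rewrite (as_cst_interp _ _ _ Ha); ring.
  - destruct (Z.eqb_spec y 0); subst; simpl; try rewrite (as_cst_interp _ _ _ Hb); ring.
  - reflexivity.
Qed.

Lemma interp_mul_s J a b : interp J (mul_s a b) = interp J a * interp J b.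
Proof.
  unfold mul_s. destruct (as_cst a) as [x|] eqn:Ha, (as_cst b) as [y|] eqn:Hb;
    try rewrite (as_cst_interp _ _ _ Ha); try rewrite (as_cst_interp _ _ _ Hb).
  - now rewrite <- mult_IZR.
  - destruct (Z.eqb_spec x 0); [|destruct (Z.eqb_spec x 1)]; subst; simpl;
      try rewrite (as_cst_interp _ _ _ Ha); ring.
  - destruct (Z.eqb_spec y 0); [|destruct (Z.eqb_spec y 1)]; subst; simpl;
      try rewrite (as_cst_interp _ _ _ Hb); ring.
  - reflexivity.
Qed.

Lemma interp_sum_s J l : interp J (sum_s l) = sum_list (map (interp J) l).
Proof. induction l; simpl; auto. rewrite interp_add_s, IHl. reflexivity. Qed.

Lemma pdiff_absent c a J : mem_coord c (coords a) = false -> interp J (pdiff c a) = 0.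
Proof.
  induction a; simpl; intros H; try reflexivity.
  - unfold mem_coord in H; simpl in H. rewrite orb_false_r in H. now rewrite H.
  - destruct (slot c) eqn:E; [|reflexivity]. apply slot_mem in E.
    unfold mem_coord, first_order_coords in *. simpl in *. congruence.
  - unfold mem_coord in H; rewrite existsb_app in H; apply orb_false_iff in H as [H1 H2].
    rewrite interp_add_s, IHa1, IHa2; auto; ring.
  - unfold mem_coord in H; rewrite existsb_app in H; apply orb_false_iff in H as [H1 H2].
    rewrite interp_add_s, !interp_mul_s, IHa1, IHa2; auto; ring.
Qed.

Hypothesis Hfs : forall f, smooth_n 9 (fs f).

Lemma pdiff_correct c a J : coord_valid c = true -> wf a = true ->
  is_derive (fun s => interp (coord_set c s J) a) (coord_val c J) (interp J (pdiff c a)).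
Proof.
  intros Hc. induction a; simpl; intros H.
  - eapply is_derive_value; [apply is_derive_const|reflexivity].
  - eapply is_derive_value; [apply is_derive_const|reflexivity].
  - eapply is_derive_ext; [intro s; symmetry; apply coord_val_set; auto|].
    destruct (coord_eqb_spec c c0), (coord_eqb_spec c0 c); subst; try congruence.
    + eapply is_derive_value; [apply is_derive_id|reflexivity].
    + eapply is_derive_value; [apply is_derive_const|reflexivity].
  - eapply is_derive_ext; [intro s; rewrite jet9_set by auto; reflexivity|].
    destruct (slot c) eqn:E.
    + destruct (slot_val _ _ J E) as [-> Hn]. simpl.
      apply (smooth_is_derive 9); auto. now apply forallb_lt9.
    + eapply is_derive_value; [apply is_derive_const|reflexivity].
  - apply andb_prop in H as [H1 H2]. rewrite interp_add_s.
    apply (is_derive_plus (fun s => interp (coord_set c s J) a1)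
                          (fun s => interp (coord_set c s J) a2)); auto.
  - apply andb_prop in H as [H1 H2]. rewrite interp_add_s, !interp_mul_s.
    eapply is_derive_value.
    + apply (is_derive_mult (fun s => interp (coord_set c s J) a1)
                            (fun s => interp (coord_set c s J) a2)); auto.
      intros; apply Rmult_comm.
    + simpl. rewrite coord_set_val by auto. unfold plus, mult; simpl. ring.
Qed.

Lemma du_interp k l m n a : wf a = true ->
  du k l m n (fun J => interp J a) = fun J => interp J (pdiff (CDer k l m n) a).
Proof.
  intros H. apply functional_extensionality; intro J. unfold du. apply is_derive_unique.
  apply (pdiff_correct (CDer k l m n) a J); auto.
Qed.

Lemma tdiff_correct i a J : (i < 4)%nat -> wf a = true ->
  Defs.D i (fun J => interp J a) J = interp J (tdiff i a).
Proof.
  intros Hi H. unfold Defs.D, tdiff. rewrite interp_add_s, interp_sum_s, map_map. f_equal.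
  - unfold dbase. apply is_derive_unique.
    apply (pdiff_correct (CBase i) a J); auto. simpl; now apply Nat.ltb_lt.
  - rewrite sum_box_coords, (sum_list_filter _ (fun c => mem_coord c (coords a))).
    + f_equal. apply map_ext; intros [j|k l m n]; simpl; [reflexivity|].
      rewrite interp_mul_s, du_interp by auto. reflexivity.
    + intros [j|k l m n] _ Hm; simpl; [reflexivity|].
      rewrite du_interp, pdiff_absent by auto. ring.
Qed.

Lemma iterD_tdiff_iter i n a : (i < 4)%nat -> wf a = true ->
  iterD i n (fun J => interp J a) = fun J => interp J (tdiff_iter i n a).
Proof.
  intros Hi H. induction n; simpl; auto. rewrite IHn.
  apply functional_extensionality; intro J. apply tdiff_correct; auto. now apply wf_tdiff_iter.
Qed.

Lemma euler_interp a J : wf a = true -> euler (fun J => interp J a) J = interp J (euler_expr a).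
Proof.
  intros H. unfold euler, euler_expr.
  rewrite sum_box_coords, interp_sum_s, map_map,
    (sum_list_filter _ (fun c => mem_coord c (coords a))).
  - f_equal. apply map_ext; intros [j|k l m n]; simpl; [reflexivity|].
    assert (W : wf (pdiff (CDer k l m n) a) = true) by (apply wf_pdiff; auto).
    rewrite du_interp by auto.
    rewrite !iterD_tdiff_iter by (repeat apply wf_tdiff_iter; auto; lia).
    rewrite interp_mul_s. simpl interp at 1. now rewrite pow_m1_sign.
  - intros [j|k l m n] _ Hm; simpl; [reflexivity|].
    rewrite du_interp by auto.
    replace (fun J => interp J (pdiff (CDer k l m n) a)) with (fun _ : jet => 0)
      by (apply functional_extensionality; intro; symmetry; now apply pdiff_absent).
    rewrite !iterD_zero. ring.
Qed.

Lemma interp_reduce known vals a J :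
  (forall f j, mem_indep f j known = true -> indep (fs f) j) ->
  (forall c z, vals c = Some z -> coord_val c J = IZR z) ->
  interp J (reduce known vals a) = interp J a.
Proof.
  intros Hk Hv. induction a; simpl; auto.
  - destruct (vals c) eqn:E; simpl; auto. symmetry; auto.
  - destruct (existsb (fun j => mem_indep f j known) l) eqn:E; simpl; auto.
    apply existsb_exists in E as [j [Hj Hm]]. symmetry. eapply pds_indep; eauto.
  - rewrite interp_add_s; congruence.
  - rewrite interp_mul_s; congruence.
Qed.

Lemma euler_reduce a J known vals : wf a = true ->
  (forall f j, mem_indep f j known = true -> indep (fs f) j) ->
  (forall c z, vals c = Some z -> coord_val c J = IZR z) ->
  euler (fun J => interp J a) J = interp J (reduce known vals (euler_expr a)).
Proof. intros. rewrite interp_reduce by auto. now apply euler_interp. Qed.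

End Interp.

(** * Multipliers of the KZK equation *)

Definition param (c0 delta beta : R) (i : nat) : R :=
  match i with 0 => c0 | 1 => delta | _ => beta end.

Definition pvar (k l m n : nat) : expr := Var (CDer k l m n).

Definition KZK_expr : expr :=
  Add (Add (Add (Mul (Par 1) (pvar 0 0 0 3))
    (Mul (Par 2) (Add (Mul (Cst 2) (Mul (pvar 0 0 0 1) (pvar 0 0 0 1)))
                      (Mul (Cst 2) (Mul (pvar 0 0 0 0) (pvar 0 0 0 2))))))
    (Mul (Cst (-2)) (Mul (Mul (Par 0) (Mul (Par 0) (Par 0))) (pvar 0 0 1 1))))
    (Mul (Mul (Mul (Par 0) (Par 0)) (Mul (Par 0) (Par 0))) (Add (pvar 2 0 0 0) (pvar 0 2 0 0))).

Definition lamE_expr : expr := Mul (At 0 nil) KZK_expr.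

Definition lam9 (Lam : R -> R -> R -> R -> R -> R -> R -> R -> R -> R) : (nat -> R) -> R :=
  fun v => Lam (v 0%nat) (v 1%nat) (v 2%nat) (v 3%nat) (v 4%nat)
               (v 5%nat) (v 6%nat) (v 7%nat) (v 8%nat).

Lemma lamE_interp c0 delta beta Lam :
  (fun J => lam_jet Lam J * KZK_E c0 delta beta J)
  = (fun J => interp (param c0 delta beta) (fun _ => lam9 Lam) J lamE_expr).
Proof.
  apply functional_extensionality; intro J.
  unfold lamE_expr, KZK_expr, KZK_E, lam_jet. simpl. unfold lam9, jet9.
  change (IZR (-2)) with (-(2)). ring.
Qed.

Definition mk_jet (v : nat -> R) (g : nat -> nat -> nat -> nat -> R) : jet :=
  Jet (v 0%nat) (v 1%nat) (v 2%nat) (v 3%nat)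
    (fun k l m n => match slot_der k l m n with Some j => v j | None => g k l m n end).

Lemma jet9_mk_jet v g : jet9 (mk_jet v g) = restrict 9 v.
Proof. apply functional_extensionality; intros [|[|[|[|[|[|[|[|[|i]]]]]]]]]; reflexivity. Qed.

Definition freeze_except (sps : list coord) (c : coord) : option Z :=
  match c with
  | CBase _ => None
  | CDer k l m n =>
      match slot_der k l m n with
      | Some _ => None
      | None => if mem_coord c sps then None else Some 0%Z
      end
  end.

Lemma freeze_except_mk_jet sps v g :
  (forall k l m n, mem_coord (CDer k l m n) sps = false -> g k l m n = 0) ->
  forall c z, freeze_except sps c = Some z -> coord_val c (mk_jet v g) = IZR z.
Proof.
  intros Hg [i|k l m n] z H; [discriminate|]. simpl in *.
  destruct (slot_der k l m n); [discriminate|].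
  destruct (mem_coord (CDer k l m n) sps) eqn:E; [discriminate|].
  injection H as <-. now apply Hg.
Qed.

Definition spike (sp : coord) (w : R) : nat -> nat -> nat -> nat -> R :=
  fun k l m n => if coord_eqb (CDer k l m n) sp then w else 0.

Lemma spike_outside sp sps w : mem_coord sp sps = true ->
  forall k l m n, mem_coord (CDer k l m n) sps = false -> spike sp w k l m n = 0.
Proof.
  intros Hsp k l m n H. unfold spike.
  destruct (coord_eqb_spec (CDer k l m n) sp) as [<-|]; congruence.
Qed.

Lemma euler_reduced_zero ps fs a known vals r v g :
  (forall f, smooth_n 9 (fs f)) -> wf a = true ->
  (forall f j, mem_indep f j known = true -> indep (fs f) j) ->
  reduce known vals (euler_expr a) = r ->
  (forall c z, vals c = Some z -> coord_val c (mk_jet v g) = IZR z) ->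
  euler (fun J => interp ps fs J a) (mk_jet v g) = 0 ->
  interp ps fs (mk_jet v g) r = 0.
Proof. intros Hfs Ha Hk <- Hv HE. rewrite <- HE. symmetry. now apply euler_reduce. Qed.

Definition top_coords : list coord :=
  CDer 0 0 0 4 :: CDer 1 0 0 3 :: CDer 0 1 0 3 :: CDer 0 0 1 3 :: nil.

(* Reduced Euler expressions are computed once and for all by [vm_compute];
   with [pds] and [jet9] kept opaque, [simpl] turns their interpretation at a
   concrete jet into an explicit polynomial identity in the partials of Lambda. *)
Definition euler_red_top : expr :=
  Eval vm_compute in reduce nil (freeze_except top_coords) (euler_expr lamE_expr).
Lemma euler_red_top_eq :
  reduce nil (freeze_except top_coords) (euler_expr lamE_expr) = euler_red_top.
Proof. vm_compute; reflexivity. Qed.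

Definition indep_derivs : list (nat * nat) := ((0, 5) :: (0, 6) :: (0, 7) :: (0, 8) :: nil)%nat.

Definition euler_red_ptt : expr :=
  Eval vm_compute in
    reduce indep_derivs (freeze_except (CDer 0 0 0 2 :: nil)) (euler_expr lamE_expr).
Lemma euler_red_ptt_eq :
  reduce indep_derivs (freeze_except (CDer 0 0 0 2 :: nil)) (euler_expr lamE_expr) = euler_red_ptt.
Proof. vm_compute; reflexivity. Qed.

Definition affine_lamE_expr : expr := Mul (Add (At 0 nil) (Mul (pvar 0 0 0 0) (At 1 nil))) KZK_expr.

Definition indep_affine : list (nat * nat) :=
  ((0, 4) :: (0, 5) :: (0, 6) :: (0, 7) :: (0, 8)
   :: (1, 4) :: (1, 5) :: (1, 6) :: (1, 7) :: (1, 8) :: nil)%nat.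

Definition euler_red_affine : expr :=
  Eval vm_compute in reduce indep_affine (freeze_except nil) (euler_expr affine_lamE_expr).
Lemma euler_red_affine_eq :
  reduce indep_affine (freeze_except nil) (euler_expr affine_lamE_expr) = euler_red_affine.
Proof. vm_compute; reflexivity. Qed.

Definition indep_all : list (nat * nat) := ((0, 4) :: indep_derivs)%nat.

Definition euler_red_xyzt : expr :=
  Eval vm_compute in reduce indep_all (freeze_except nil) (euler_expr lamE_expr).
Lemma euler_red_xyzt_eq :
  reduce indep_all (freeze_except nil) (euler_expr lamE_expr) = euler_red_xyzt.
Proof. vm_compute; reflexivity. Qed.

Arguments pds : simpl never.
Arguments jet9 : simpl never.

Section Necessity.
Variables (c0 delta beta : R) (Lam : R -> R -> R -> R -> R -> R -> R -> R -> R -> R).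
Hypotheses (Hc0 : 0 < c0) (Hdelta : 0 < delta) (Hbeta : 0 < beta).
Hypothesis HL : smooth9 Lam.
Hypothesis HM : is_multiplier c0 delta beta Lam.

Let ps := param c0 delta beta.
Let f := lam9 Lam.

Lemma euler_lamE_zero J : euler (fun J => interp ps (fun _ => f) J lamE_expr) J = 0.
Proof. rewrite <- (HM J). unfold is_multiplier. now rewrite lamE_interp. Qed.

Lemma euler_lamE_at known sps red v g :
  (forall f' j, mem_indep f' j known = true -> indep f j) ->
  reduce known (freeze_except sps) (euler_expr lamE_expr) = red ->
  (forall k l m n, mem_coord (CDer k l m n) sps = false -> g k l m n = 0) ->
  interp ps (fun _ => f) (mk_jet v g) red = 0.
Proof.
  intros Hk Hred Hg.
  exact (euler_reduced_zero _ _ lamE_expr known (freeze_except sps) red v g (fun _ => HL)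
           eq_refl Hk Hred (freeze_except_mk_jet sps v g Hg) (euler_lamE_zero _)).
Qed.

(* The coefficient of p_tttt (resp. p_xttt, p_yttt, p_zttt) in E_p[Lambda E] is
   -2 delta Lambda_{p_t} (resp. Lambda_{p_x}, Lambda_{p_y}, Lambda_{p_z}). *)
Lemma lam_indep_first_derivs j : (5 <= j <= 8)%nat -> indep f j.
Proof.
  intros Hj. apply (indep_of_pd_zero 9); [exact HL|lia|]. intro v.
  change (pd j f v) with (pds (j :: nil) f v).
  rewrite (pds_restrict 9 f) by forall_lt.
  set (sp := match j with 5 => CDer 1 0 0 3 | 6 => CDer 0 1 0 3
                         | 7 => CDer 0 0 1 3 | _ => CDer 0 0 0 4 end).
  assert (Hsp : mem_coord sp top_coords = true)
    by (unfold sp; destruct j as [|[|[|[|[|[|[|[|[|j]]]]]]]]]; reflexivity || lia).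
  pose proof (euler_lamE_at nil top_coords _ v (spike sp 1) (mem_indep_nil _)
                euler_red_top_eq (spike_outside _ _ 1 Hsp)) as H1.
  pose proof (euler_lamE_at nil top_coords _ v (spike sp 0) (mem_indep_nil _)
                euler_red_top_eq (spike_outside _ _ 0 Hsp)) as H0.
  pose proof (f_equal2 Rminus H1 H0) as H. clear H0 H1.
  unfold euler_red_top in H; simpl in H; rewrite !jet9_mk_jet in H.
  unfold sp in H; clear sp Hsp; destruct j as [|[|[|[|[|[|[|[|[|j]]]]]]]]]; try lia;
    unfold spike in H; simpl in H; ring_simplify in H; nra.
Qed.

Lemma known_indep_derivs f' j : mem_indep f' j indep_derivs = true -> indep f j.
Proof.
  intros H. apply mem_indep_In in H. simpl in H.
  apply lam_indep_first_derivs.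
  repeat destruct H as [H|H]; try (injection H as _ <-; lia); contradiction.
Qed.

(* Comparing E_p[Lambda E] at (p_t, p_tt) in {0, 1}^2 isolates -3 delta Lambda_pp. *)
Lemma lam_affine_in_p : indep (pd 4 f) 4.
Proof.
  apply (indep_of_pd_zero 9); [apply smooth_pd; [exact HL|lia]|lia|]. intro v.
  change (pd 4 (pd 4 f) v) with (pds (4 :: 4 :: nil)%nat f v).
  rewrite (pds_restrict 9 f) by forall_lt.
  assert (Hsp : mem_coord (CDer 0 0 0 2) (CDer 0 0 0 2 :: nil) = true) by reflexivity.
  assert (Hpt : forall l a, pds l f (upd (restrict 9 v) 8 a) = pds l f (restrict 9 v))
    by (intros l a; apply indep_pds, lam_indep_first_derivs; lia).
  assert (Hval : forall a w, interp ps (fun _ => f)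
            (mk_jet (upd v 8 a) (spike (CDer 0 0 0 2) w)) euler_red_ptt = 0).
  { intros a w. apply (euler_lamE_at indep_derivs (CDer 0 0 0 2 :: nil));
      [apply known_indep_derivs|apply euler_red_ptt_eq|apply spike_outside, Hsp]. }
  pose proof (Hval 0 0) as H00. pose proof (Hval 0 1) as H01.
  pose proof (Hval 1 0) as H10. pose proof (Hval 1 1) as H11. clear Hval.
  unfold euler_red_ptt in H00, H01, H10, H11. simpl in H00, H01, H10, H11.
  rewrite !jet9_mk_jet, !restrict_upd, !Hpt in H00, H01, H10, H11 by lia.
  unfold spike, upd in H00, H01, H10, H11; simpl in H00, H01, H10, H11.
  pose proof (f_equal2 Rminus (f_equal2 Rminus H11 H10) (f_equal2 Rminus H01 H00)) as H.
  ring_simplify in H. nra.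
Qed.

Definition lam_p0 (v : nat -> R) : R := f (upd v 4 0).
Definition lam_p1 (v : nat -> R) : R := pd 4 f (upd v 4 0).
Definition lam_parts (k : nat) : (nat -> R) -> R :=
  match k with 0 => lam_p0 | _ => lam_p1 end.

Lemma lam_affine v : f v = lam_p0 v + v 4%nat * lam_p1 v.
Proof. apply (affine_of_indep 9); [exact HL|lia|apply lam_affine_in_p]. Qed.

Lemma lam_parts_smooth k : smooth_n 9 (lam_parts k).
Proof.
  destruct k; apply smooth_upd; try lia; [exact HL|apply smooth_pd; [exact HL|lia]].
Qed.

Lemma lam_parts_indep k j : (4 <= j <= 8)%nat -> indep (lam_parts k) j.
Proof.
  intros Hj. destruct (Nat.eq_dec j 4) as [->|Hj4].
  - destruct k; apply indep_upd.
  - intros v s. destruct k; simpl; unfold lam_p0, lam_p1; rewrite upd_comm by lia;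
      [|apply indep_pd]; apply lam_indep_first_derivs; lia.
Qed.

Lemma euler_affine_lamE_zero J :
  euler (fun J => interp ps lam_parts J affine_lamE_expr) J = 0.
Proof.
  rewrite <- (HM J). unfold is_multiplier. rewrite lamE_interp. f_equal.
  apply functional_extensionality; intro J'.
  unfold affine_lamE_expr, lamE_expr. cbn [interp coord_val lam_parts pds].
  now rewrite lam_affine.
Qed.

(* Comparing E_p[(A + p B) E] at p_t = -1, 0, 1 isolates 4 beta B. *)
Lemma lam_indep_p : indep f 4.
Proof.
  assert (Hp1 : forall v, lam_p1 (restrict 9 v) = 0).
  { intro v.
    assert (Hpt0 : forall l a,
               pds l lam_p0 (upd (restrict 9 v) 8 a) = pds l lam_p0 (restrict 9 v))
      by (intros l a; apply indep_pds, (lam_parts_indep 0); lia).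
    assert (Hpt1 : forall l a,
               pds l lam_p1 (upd (restrict 9 v) 8 a) = pds l lam_p1 (restrict 9 v))
      by (intros l a; apply indep_pds, (lam_parts_indep 1); lia).
    assert (Hval : forall a, interp ps lam_parts
              (mk_jet (upd v 8 a) (fun _ _ _ _ => 0)) euler_red_affine = 0).
    { intro a. apply (euler_reduced_zero _ _ affine_lamE_expr indep_affine (freeze_except nil));
        auto using lam_parts_smooth, euler_affine_lamE_zero, euler_red_affine_eq.
      - intros k j H. apply mem_indep_In in H. apply lam_parts_indep.
        repeat destruct H as [H|H]; try (injection H as _ <-; lia); contradiction.
      - now apply freeze_except_mk_jet. }
    pose proof (Hval 0) as H0. pose proof (Hval 1) as H1. pose proof (Hval (-1)) as H2.
    clear Hval. unfold euler_red_affine in H0, H1, H2. simpl in H0, H1, H2.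
    rewrite !jet9_mk_jet, !restrict_upd, !Hpt0, !Hpt1 in H0, H1, H2 by lia.
    unfold upd in H0, H1, H2; simpl in H0, H1, H2.
    pose proof (f_equal2 Rplus (f_equal2 Rminus H1 H0) (f_equal2 Rminus H2 H0)) as H.
    ring_simplify in H. change (pds nil lam_p1 (restrict 9 v)) with (lam_p1 (restrict 9 v)) in H.
    nra. }
  assert (Hp1' : forall v, lam_p1 v = 0).
  { intro v. rewrite <- (Hp1 v). unfold lam_p1.
    change (pd 4 f) with (pds (4 :: nil)%nat (fun w => f (restrict 9 w))).
    rewrite pds_restrict, restrict_upd by (lia || forall_lt). reflexivity. }
  intros v s. rewrite (lam_affine (upd v 4 s)), (lam_affine v), !Hp1'.
  unfold lam_p0. rewrite upd_upd. ring.
Qed.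

Lemma lam_indep_p_derivs j : (4 <= j <= 8)%nat -> indep f j.
Proof.
  intros Hj. destruct (Nat.eq_dec j 4) as [->|];
    [apply lam_indep_p|apply lam_indep_first_derivs; lia].
Qed.

Lemma known_indep_all f' j : mem_indep f' j indep_all = true -> indep f j.
Proof.
  intros H. apply mem_indep_In in H. simpl in H. apply lam_indep_p_derivs.
  repeat destruct H as [H|H]; try (injection H as _ <-; lia); contradiction.
Qed.

Lemma euler_red_xyzt_at v a :
  interp ps (fun _ => f) (mk_jet (upd v 4 a) (fun _ _ _ _ => 0)) euler_red_xyzt = 0.
Proof.
  apply (euler_lamE_at indep_all nil);
    [apply known_indep_all|apply euler_red_xyzt_eq|reflexivity].
Qed.

Lemma lam_euler_xyzt v a :
  2 * beta * a * pds (3 :: 3 :: nil)%nat f (restrict 9 v)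
  - delta * pds (3 :: 3 :: 3 :: nil)%nat f (restrict 9 v)
  - 2 * c0 ^ 3 * pds (2 :: 3 :: nil)%nat f (restrict 9 v)
  + c0 ^ 4 * (pds (0 :: 0 :: nil)%nat f (restrict 9 v)
              + pds (1 :: 1 :: nil)%nat f (restrict 9 v))
  = 0.
Proof.
  pose proof (euler_red_xyzt_at v a) as H. unfold euler_red_xyzt in H. simpl in H.
  rewrite !jet9_mk_jet, !restrict_upd, !(indep_pds _ _ _ lam_indep_p) in H by lia.
  rewrite upd_eq in H. rewrite <- H. ring.
Qed.

Lemma lam_affine_in_t : indep (pd 3 f) 3.
Proof.
  apply (indep_of_pd_zero 9); [apply smooth_pd; [exact HL|lia]|lia|]. intro v.
  change (pd 3 (pd 3 f) v) with (pds (3 :: 3 :: nil)%nat f v).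
  rewrite (pds_restrict 9 f) by forall_lt.
  pose proof (lam_euler_xyzt v 0) as H0. pose proof (lam_euler_xyzt v 1) as H1. nra.
Qed.

Lemma lam_determining v :
  2 * c0 ^ 3 * pds (2 :: 3 :: nil)%nat f (restrict 9 v)
  = c0 ^ 4 * (pds (0 :: 0 :: nil)%nat f (restrict 9 v)
              + pds (1 :: 1 :: nil)%nat f (restrict 9 v)).
Proof.
  pose proof (lam_euler_xyzt v 0) as H.
  change (pds (3 :: 3 :: 3 :: nil)%nat f (restrict 9 v))
    with (pd 3 (pd 3 (pd 3 f)) (restrict 9 v)) in H.
  rewrite (pd_zero 3 (pd 3 (pd 3 f))) in H by (intro; apply pd_indep, lam_affine_in_t).
  lra.
Qed.

Definition lam_phi (x y z : R) : R := Lam x y z 0 0 0 0 0 0.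
Definition lam_psi (x y z : R) : R := Derive (fun t => Lam x y z t 0 0 0 0 0) 0.

Lemma lam_phi_smooth : smooth3 lam_phi.
Proof. exact (smooth_restrict 9 f HL 3 ltac:(lia)). Qed.

Lemma lam_psi_smooth : smooth3 lam_psi.
Proof. exact (smooth_restrict 9 (pd 3 f) (smooth_pd 9 f HL 3 ltac:(lia)) 3 ltac:(lia)). Qed.

Lemma lam_form x y z t q qx qy qz qt :
  Lam x y z t q qx qy qz qt = lam_phi x y z + t * lam_psi x y z.
Proof.
  set (w := fun i => match i with 0 => x | 1 => y | 2 => z | 3 => t | 4 => q | 5 => qx
                                | 6 => qy | 7 => qz | _ => qt end).
  change (Lam x y z t q qx qy qz qt) with (f w).
  rewrite (affine_of_indep 9 f HL 3 ltac:(lia) lam_affine_in_t w).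
  assert (Hlow : forall g, (forall j, (4 <= j <= 8)%nat -> indep g j) -> forall u,
             g u = g (upd (upd (upd (upd (upd u 4 0) 5 0) 6 0) 7 0) 8 0)).
  { intros g Hg u. rewrite !Hg by lia. reflexivity. }
  rewrite (Hlow f lam_indep_p_derivs),
    (Hlow (pd 3 f) (fun j Hj => indep_pd f 3 j (lam_indep_p_derivs j Hj))).
  reflexivity.
Qed.

Lemma multiplier_form : exists phi psi : R -> R -> R -> R,
  smooth3 phi /\ smooth3 psi /\
  (forall x y z t q qx qy qz qt, Lam x y z t q qx qy qz qt = phi x y z + t * psi x y z) /\
  (forall x y z, d3x (d3x phi) x y z + d3y (d3y phi) x y z = 2 / c0 * d3z psi x y z) /\
  (forall x y z, d3x (d3x psi) x y z + d3y (d3y psi) x y z = 0).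
Proof.
  exists lam_phi, lam_psi.
  assert (Hf : forall u, f u = at3 lam_phi u + u 3%nat * at3 lam_psi u)
    by (intro; apply lam_form).
  assert (Hdet : forall x y z t,
    2 * c0 ^ 3 * d3z lam_psi x y z
    = c0 ^ 4 * (d3x (d3x lam_phi) x y z + t * d3x (d3x lam_psi) x y z
                + (d3y (d3y lam_phi) x y z + t * d3y (d3y lam_psi) x y z))).
  { intros x y z t. pose proof (lam_determining (vec4 x y z t)) as H.
    rewrite (pds_zt_affine lam_phi lam_psi f lam_psi_smooth Hf),
      (pds_xx_affine lam_phi lam_psi f lam_phi_smooth lam_psi_smooth Hf),
      (pds_yy_affine lam_phi lam_psi f lam_phi_smooth lam_psi_smooth Hf) in H.
    exact H. }
  assert (Hc4 : c0 ^ 4 <> 0) by (apply pow_nonzero; lra).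
  split; [exact lam_phi_smooth|]. split; [exact lam_psi_smooth|]. split; [exact lam_form|].
  split; intros x y z; apply (Rmult_eq_reg_l (c0 ^ 4)); auto.
  - pose proof (Hdet x y z 0) as H.
    replace (c0 ^ 4 * (2 / c0 * d3z lam_psi x y z)) with (2 * c0 ^ 3 * d3z lam_psi x y z)
      by (field; lra). lra.
  - pose proof (Hdet x y z 0) as H0. pose proof (Hdet x y z 1) as H1. nra.
Qed.
End Necessity.

Definition euler_red_full : expr :=
  Eval vm_compute in reduce indep_all (fun _ => None) (euler_expr lamE_expr).
Lemma euler_red_full_eq : reduce indep_all (fun _ => None) (euler_expr lamE_expr) = euler_red_full.
Proof. vm_compute; reflexivity. Qed.

Section Sufficiency.
Variables (c0 delta beta : R) (Lam : R -> R -> R -> R -> R -> R -> R -> R -> R -> R)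
  (phi psi : R -> R -> R -> R).
Hypothesis Hc0 : 0 < c0.
Hypotheses (HL : smooth9 Lam) (Hphi : smooth3 phi) (Hpsi : smooth3 psi).
Hypothesis Hform :
  forall x y z t q qx qy qz qt, Lam x y z t q qx qy qz qt = phi x y z + t * psi x y z.
Hypothesis Hphi_eq :
  forall x y z, d3x (d3x phi) x y z + d3y (d3y phi) x y z = 2 / c0 * d3z psi x y z.
Hypothesis Hpsi_eq : forall x y z, d3x (d3x psi) x y z + d3y (d3y psi) x y z = 0.

Let f := lam9 Lam.

Lemma lam9_form u : f u = at3 phi u + u 3%nat * at3 psi u.
Proof. apply Hform. Qed.

Lemma known_indep_all_form f' j : mem_indep f' j indep_all = true -> indep f j.
Proof.
  intros H. apply mem_indep_In in H. simpl in H.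
  assert (Hj : (4 <= j)%nat)
    by (repeat destruct H as [H|H]; try (injection H as _ <-; lia); contradiction).
  intros v s. rewrite !lam9_form. unfold at3. upd_simpl. reflexivity.
Qed.

Lemma multiplier_of_form : is_multiplier c0 delta beta Lam.
Proof.
  intro J. rewrite lamE_interp.
  rewrite (euler_reduce _ _ (fun _ => HL) lamE_expr J indep_all (fun _ => None) eq_refl
             known_indep_all_form) by discriminate.
  rewrite euler_red_full_eq. unfold euler_red_full. simpl.
  rewrite (pds_tt_affine phi psi f lam9_form), (pds_ttt_affine phi psi f lam9_form),
    (pds_zt_affine phi psi f Hpsi lam9_form), (pds_yy_affine phi psi f Hphi Hpsi lam9_form),
    (pds_xx_affine phi psi f Hphi Hpsi lam9_form).
  unfold at3. set (x := jet9 J 0%nat). set (y := jet9 J 1%nat). set (z := jet9 J 2%nat).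
  pose proof (Hphi_eq x y z). pose proof (Hpsi_eq x y z).
  replace (d3x (d3x phi) x y z) with (2 / c0 * d3z psi x y z - d3y (d3y phi) x y z) by lra.
  replace (d3x (d3x psi) x y z) with (- d3y (d3y psi) x y z) by lra.
  field. lra.
Qed.

End Sufficiency.

(** * The conservation law *)

Lemma is_derive_Tt_profile (A B C Z : R -> R) a b d be c t dA dB dC dZ :
  is_derive A t dA -> is_derive B t dB -> is_derive C t dC -> is_derive Z t dZ ->
  is_derive (fun s => (a + s * b) * (d * C s + 2 * be * A s * B s - 2 * c ^ 3 * Z s)
                      - b * (d * B s + be * (A s) ^ 2)) t
   (b * (d * C t + 2 * be * A t * B t - 2 * c ^ 3 * Z t)
    + (a + t * b) * (d * dC + 2 * be * (dA * B t + A t * dB) - 2 * c ^ 3 * dZ)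
    - b * (d * dB + be * 2 * A t * dA)).
Proof.
  intros HA HB HC HZ. auto_derive.
  - repeat split; eexists; eauto.
  - rewrite (is_derive_unique (fun r : R => A r) _ _ HA),
      (is_derive_unique (fun r : R => B r) _ _ HB),
      (is_derive_unique (fun r : R => C r) _ _ HC),
      (is_derive_unique (fun r : R => Z r) _ _ HZ).
    ring.
Qed.

Lemma is_derive_Txy_profile (F G F1 G1 P Px : R -> R) c t x dF dG dF1 dG1 dP dPx :
  is_derive F x dF -> is_derive G x dG -> is_derive F1 x dF1 -> is_derive G1 x dG1 ->
  is_derive P x dP -> is_derive Px x dPx ->
  is_derive (fun s => c ^ 4 * ((F s + t * G s) * Px s - P s * (F1 s + t * G1 s))) x
    (c ^ 4 * ((dF + t * dG) * Px x + (F x + t * G x) * dPx - dP * (F1 x + t * G1 x)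
              - P x * (dF1 + t * dG1))).
Proof.
  intros H1 H2 H3 H4 H5 H6. auto_derive.
  - repeat split; eexists; eauto.
  - rewrite (is_derive_unique (fun r : R => F r) _ _ H1),
      (is_derive_unique (fun r : R => G r) _ _ H2),
      (is_derive_unique (fun r : R => F1 r) _ _ H3),
      (is_derive_unique (fun r : R => G1 r) _ _ H4),
      (is_derive_unique (fun r : R => P r) _ _ H5),
      (is_derive_unique (fun r : R => Px r) _ _ H6).
    ring.
Qed.

Lemma is_derive_Tz_profile (P S : R -> R) c z dP dS :
  is_derive P z dP -> is_derive S z dS ->
  is_derive (fun s => 2 * c ^ 3 * P s * S s) z (2 * c ^ 3 * (dP * S z + P z * dS)).
Proof.
  intros H1 H2. auto_derive.
  - repeat split; eexists; eauto.
  - rewrite (is_derive_unique (fun r : R => P r) _ _ H1),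
      (is_derive_unique (fun r : R => S r) _ _ H2).
    ring.
Qed.

Lemma is_derive_sqr (A : R -> R) t dA :
  is_derive A t dA -> is_derive (fun s => (A s) ^ 2) t (2 * A t * dA).
Proof.
  intros H. auto_derive.
  - eexists; eauto.
  - rewrite (is_derive_unique (fun r : R => A r) _ _ H).
    ring.
Qed.

Lemma is_derive_double_mult (A B : R -> R) t dA dB : is_derive A t dA -> is_derive B t dB ->
  is_derive (fun s => 2 * A s * B s) t (2 * (dA * B t + A t * dB)).
Proof.
  intros H1 H2. auto_derive.
  - repeat split; eexists; eauto.
  - rewrite (is_derive_unique (fun r : R => A r) _ _ H1),
      (is_derive_unique (fun r : R => B r) _ _ H2).
    ring.
Qed.

Section Conservation.
Variables (c0 delta beta : R) (phi psi : R -> R -> R -> R) (p : R -> R -> R -> R -> R).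
Hypothesis Hc0 : 0 < c0.
Hypotheses (Hphi : smooth3 phi) (Hpsi : smooth3 psi) (Hp : smooth4 p).
Hypothesis Hphi_eq :
  forall x y z, d3x (d3x phi) x y z + d3y (d3y phi) x y z = 2 / c0 * d3z psi x y z.
Hypothesis Hpsi_eq : forall x y z, d3x (d3x psi) x y z + d3y (d3y psi) x y z = 0.
Hypothesis Hsol : forall x y z t, KZK_op c0 delta beta p x y z t = 0.

Lemma d4t_Tt x y z t : d4t (Tt c0 delta beta phi psi p) x y z t =
  psi x y z * (delta * d4t (d4t p) x y z t + 2 * beta * p x y z t * d4t p x y z t
               - 2 * c0 ^ 3 * d4z p x y z t)
  + (phi x y z + t * psi x y z) * (delta * d4t (d4t (d4t p)) x y z t
      + 2 * beta * (d4t p x y z t * d4t p x y z t + p x y z t * d4t (d4t p) x y z t)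
      - 2 * c0 ^ 3 * d4t (d4z p) x y z t)
  - psi x y z * (delta * d4t (d4t p) x y z t + beta * 2 * p x y z t * d4t p x y z t).
Proof.
  apply is_derive_unique. unfold Tt.
  apply (is_derive_Tt_profile (fun s => p x y z s) (fun s => d4t p x y z s)
           (fun s => d4t (d4t p) x y z s) (fun s => d4z p x y z s)).
  - apply is_derive4_t, Hp.
  - apply is_derive4_t, smooth4_dt, Hp.
  - apply is_derive4_t, smooth4_dt, smooth4_dt, Hp.
  - apply is_derive4_t, smooth4_dz, Hp.
Qed.

Lemma d4x_Tx x y z t : d4x (Tx c0 phi psi p) x y z t =
  c0 ^ 4 * ((d3x phi x y z + t * d3x psi x y z) * d4x p x y z t
     + (phi x y z + t * psi x y z) * d4x (d4x p) x y z t
     - d4x p x y z t * (d3x phi x y z + t * d3x psi x y z)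
     - p x y z t * (d3x (d3x phi) x y z + t * d3x (d3x psi) x y z)).
Proof.
  apply is_derive_unique. unfold Tx.
  apply (is_derive_Txy_profile (fun s => phi s y z) (fun s => psi s y z) (fun s => d3x phi s y z)
           (fun s => d3x psi s y z) (fun s => p s y z t) (fun s => d4x p s y z t)).
  - apply is_derive3_x, Hphi.
  - apply is_derive3_x, Hpsi.
  - apply is_derive3_x, smooth3_dx, Hphi.
  - apply is_derive3_x, smooth3_dx, Hpsi.
  - apply is_derive4_x, Hp.
  - apply is_derive4_x, smooth4_dx, Hp.
Qed.

Lemma d4y_Ty x y z t : d4y (Ty c0 phi psi p) x y z t =
  c0 ^ 4 * ((d3y phi x y z + t * d3y psi x y z) * d4y p x y z t
     + (phi x y z + t * psi x y z) * d4y (d4y p) x y z t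
     - d4y p x y z t * (d3y phi x y z + t * d3y psi x y z)
     - p x y z t * (d3y (d3y phi) x y z + t * d3y (d3y psi) x y z)).
Proof.
  apply is_derive_unique. unfold Ty.
  apply (is_derive_Txy_profile (fun s => phi x s z) (fun s => psi x s z) (fun s => d3y phi x s z)
           (fun s => d3y psi x s z) (fun s => p x s z t) (fun s => d4y p x s z t)).
  - apply is_derive3_y, Hphi.
  - apply is_derive3_y, Hpsi.
  - apply is_derive3_y, smooth3_dy, Hphi.
  - apply is_derive3_y, smooth3_dy, Hpsi.
  - apply is_derive4_y, Hp.
  - apply is_derive4_y, smooth4_dy, Hp.
Qed.

Lemma d4z_Tz x y z t : d4z (Tz c0 psi p) x y z t =
  2 * c0 ^ 3 * (d4z p x y z t * psi x y z + p x y z t * d3z psi x y z).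
Proof.
  apply is_derive_unique. unfold Tz.
  apply (is_derive_Tz_profile (fun s => p x y s t) (fun s => psi x y s)).
  - apply is_derive4_z, Hp.
  - apply is_derive3_z, Hpsi.
Qed.

Lemma d4tt_sqr x y z t : d4t (d4t (fun x' y' z' t' => (p x' y' z' t') ^ 2)) x y z t =
  2 * (d4t p x y z t * d4t p x y z t + p x y z t * d4t (d4t p) x y z t).
Proof.
  assert (E : forall s, d4t (fun x' y' z' t' => (p x' y' z' t') ^ 2) x y z s
                        = 2 * p x y z s * d4t p x y z s).
  { intro s. apply is_derive_unique, (is_derive_sqr (fun r => p x y z r)), is_derive4_t, Hp. }
  unfold d4t at 1. rewrite (Derive_ext _ _ _ E). apply is_derive_unique.
  apply (is_derive_double_mult (fun s => p x y z s) (fun s => d4t p x y z s)).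
  - apply is_derive4_t, Hp.
  - apply is_derive4_t, smooth4_dt, Hp.
Qed.

(* The divergence equals (phi + t psi) E - c0^4 p [(Delta phi - 2 psi_z / c0) + t Delta psi]. *)
Lemma conservation x y z t :
  d4t (Tt c0 delta beta phi psi p) x y z t + d4x (Tx c0 phi psi p) x y z t
  + d4y (Ty c0 phi psi p) x y z t + d4z (Tz c0 psi p) x y z t = 0.
Proof.
  rewrite d4t_Tt, d4x_Tx, d4y_Ty, d4z_Tz.
  pose proof (Hsol x y z t) as E. unfold KZK_op in E.
  rewrite d4tt_sqr, (smooth4_schwarz_zt p x y z t Hp) in E.
  pose proof (Hphi_eq x y z). pose proof (Hpsi_eq x y z).
  replace (d3x (d3x phi) x y z) with (2 / c0 * d3z psi x y z - d3y (d3y phi) x y z) by lra.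
  replace (d3x (d3x psi) x y z) with (- d3y (d3y psi) x y z) by lra.
  transitivity ((phi x y z + t * psi x y z) *
    (delta * d4t (d4t (d4t p)) x y z t
     + beta * (2 * (d4t p x y z t * d4t p x y z t + p x y z t * d4t (d4t p) x y z t))
     - 2 * c0 ^ 3 * d4t (d4z p) x y z t
     + c0 ^ 4 * (d4x (d4x p) x y z t + d4y (d4y p) x y z t))).
  - field. lra.
  - rewrite E. ring.
Qed.

End Conservation.

Theorem mainTheorem3 (c0 delta beta : R)
  (Hc0 : 0 < c0) (Hdelta : 0 < delta) (Hbeta : 0 < beta) :
  (forall Lam : R -> R -> R -> R -> R -> R -> R -> R -> R -> R,
     smooth9 Lam ->
     (is_multiplier c0 delta beta Lam <->
      exists phi psi : R -> R -> R -> R,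
        smooth3 phi /\ smooth3 psi /\
        (forall x y z t q qx qy qz qt,
           Lam x y z t q qx qy qz qt = phi x y z + t * psi x y z) /\
        (forall x y z,
           d3x (d3x phi) x y z + d3y (d3y phi) x y z = 2 / c0 * d3z psi x y z) /\
        (forall x y z, d3x (d3x psi) x y z + d3y (d3y psi) x y z = 0)))
  /\
  (forall (phi psi : R -> R -> R -> R) (p : R -> R -> R -> R -> R),
     smooth3 phi -> smooth3 psi ->
     (forall x y z,
        d3x (d3x phi) x y z + d3y (d3y phi) x y z = 2 / c0 * d3z psi x y z) ->
     (forall x y z, d3x (d3x psi) x y z + d3y (d3y psi) x y z = 0) ->
     smooth4 p ->
     (forall x y z t, KZK_op c0 delta beta p x y z t = 0) ->
     forall x y z t,
       d4t (Tt c0 delta beta phi psi p) x y z t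
       + d4x (Tx c0 phi psi p) x y z t
       + d4y (Ty c0 phi psi p) x y z t
       + d4z (Tz c0 psi p) x y z t = 0).
Proof.
  split.
  - intros Lam HL. split.
    + exact (multiplier_form c0 delta beta Lam Hc0 Hdelta Hbeta HL).
    + intros (phi & psi & Hphi & Hpsi & Hform & Hphi_eq & Hpsi_eq).
      exact (multiplier_of_form c0 delta beta Lam phi psi Hc0 HL Hphi Hpsi Hform Hphi_eq Hpsi_eq).
  - intros phi psi p Hphi Hpsi Hphi_eq Hpsi_eq Hp Hsol.
    exact (conservation c0 delta beta phi psi p Hc0 Hphi Hpsi Hp Hphi_eq Hpsi_eq Hsol).
Qed.
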